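(* Let $X_n=(\mathbb{C}^n,\|\cdot\|)$ be a symmetric Banach lattice and $J\subset\Lambda_T(m,n)$ an index set, where $m\le n$. Then $$\widehat{\boldsymbol{\lambda}}\big(\mathcal{P}_J(X_n)\big)\le e^m\Big(\frac{\varphi_{X_n'}(n)}{\varphi_{X_n'}(m)}\Big)^m.$$
   Context: A Banach lattice $X_n=(\mathbb{C}^n,\|\cdot\|)$ is a norm with $\|z\|\le\|w\|$ whenever $|z_k|\le|w_k|$ for all $k$; it is symmetric if $\|(z_{\sigma(k)})\|=\|z\|$ for every permutation $\sigma$. $X_n'$ is the Köthe dual ($\|x\|_{X_n'}=\sup\{\sum|x_ky_k|:\|y\|\le1\}$) and $\varphi_{X_n'}(k)=\|\sum_{j=1}^ke_j\|_{X_n'}$. $\Lambda_T(m,n)$ is the set of $\alpha\in\{0,1\}^n$ with $|\alpha|=m$. $c_{X_n}(\alpha)=1/\sup_{z\in B_{X_n}}|z^\alpha|$ ($B_{X_n}$ the open unit ball), and $\widehat{\boldsymbol{\lambda}}(\mathcal{P}_J(X_n))=\sup_{z\in B_{X_n}}\sum_{\alpha\in J}c_{X_n}(\alpha)|z^\alpha|$. *)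

From HB Require Import structures.
From mathcomp Require Import all_boot all_order all_algebra.
From mathcomp Require Import perm complex.
From mathcomp Require Import classical_sets reals sequences exp.
Set Implicit Arguments. Unset Strict Implicit. Unset Printing Implicit Defensive.
Import Order.TTheory GRing.Theory Num.Theory.
Local Open Scope ring_scope.
Local Open Scope classical_set_scope.

Section Defs.
Variables (R : realType) (n : nat).

Definition cmod (z : R[i]) : R := Num.sqrt (complex.Re z ^+ 2 + complex.Im z ^+ 2).

Definition is_norm (N : ('I_n -> R[i]) -> R) : Prop :=
  [/\ (forall z, N z = 0 -> forall k, z k = 0),
      (forall (a : R[i]) z, N (fun k => a * z k) = cmod a * N z) &
      (forall z w, N (fun k => z k + w k) <= N z + N w)].

Definition is_lattice_norm (N : ('I_n -> R[i]) -> R) : Prop :=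
  forall z w, (forall k, cmod (z k) <= cmod (w k)) -> N z <= N w.

Definition is_symmetric_norm (N : ('I_n -> R[i]) -> R) : Prop :=
  forall (s : {perm 'I_n}) z, N (fun k => z (s k)) = N z.

Definition kothe_norm (N : ('I_n -> R[i]) -> R) (x : 'I_n -> R[i]) : R :=
  sup [set r | exists y, N y <= 1 /\ r = \sum_k cmod (x k * y k)].

Definition phi_dual (N : ('I_n -> R[i]) -> R) (k : nat) : R :=
  kothe_norm N (fun j => if (j < k)%N then 1 else 0).

(* a multi-index alpha in {0,1}^n is encoded by its support A; z^alpha = prod_{k in A} z_k,
   and |alpha| = #|A| *)
Definition monom (A : {set 'I_n}) (z : 'I_n -> R[i]) : R[i] := \prod_(k in A) z k.

Definition cX (N : ('I_n -> R[i]) -> R) (A : {set 'I_n}) : R :=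
  1 / sup [set r | exists z, N z < 1 /\ r = cmod (monom A z)].

Definition lambda_hat (N : ('I_n -> R[i]) -> R) (J : {set {set 'I_n}}) : R :=
  sup [set r | exists z, N z < 1 /\ r = \sum_(A in J) cX N A * cmod (monom A z)].

End Defs.

(* For z in the open unit ball and |alpha| = m we show
   c(alpha) |z^alpha| <= (m / phi(m))^m prod_{k in alpha} |z_k|, phi = phi_{X_n'}.
   Indeed, for y in the unit ball, averaging |y o s| over the permutations s
   carrying the block {0, ..., m-1} onto the support of alpha yields, by symmetry,
   convexity and the lattice property, the constant vector (sum_{j<m} |y_j|) / m on
   that support, still in the unit ball; taking the supremum over y gives
   sup_ball |z^alpha| >= (phi(m) / m)^m.  Summing over alpha in J, the
   elementary symmetric sum is bounded by
   tau^m e_m(|z|) <= prod_k (1 + tau |z_k|) <= exp (tau sum_k |z_k|),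
   and sum_k |z_k| <= phi(n); the choice tau = m / phi(n) gives e^m (phi(n) / m)^m. *)

From HB Require Import structures.
From mathcomp Require Import all_boot all_order all_algebra.
From mathcomp Require Import perm complex.
From mathcomp Require Import classical_sets reals sequences exp.
From mathcomp Require Import ring lra.
Set Implicit Arguments. Unset Strict Implicit. Unset Printing Implicit Defensive.
Import Order.TTheory GRing.Theory Num.Theory.
Local Open Scope ring_scope.
Local Open Scope complex_scope.

Section Modulus.
Variable R : realType.
Implicit Types (z w : R[i]) (r : R).

Lemma cmodE z : cmod z = Normc.normc z. Proof. by case: z. Qed.

Lemma cmod_ge0 z : 0 <= cmod z. Proof. exact: sqrtr_ge0. Qed.

Lemma cmodM z w : cmod (z * w) = cmod z * cmod w.
Proof. by rewrite !cmodE Normc.normcM. Qed.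

Lemma cmod0 : cmod (0 : R[i]) = 0. Proof. by rewrite cmodE Normc.normc0. Qed.

Lemma cmod1 : cmod (1 : R[i]) = 1. Proof. by rewrite cmodE Normc.normc1. Qed.

Lemma cmodN z : cmod (- z) = cmod z. Proof. by rewrite !cmodE normcN. Qed.

Lemma cmod_real r : cmod r%:C = `|r|.
Proof. by rewrite /cmod /= expr0n /= addr0 sqrtr_sqr. Qed.

Lemma cmod_prod (I : finType) (P : pred I) (F : I -> R[i]) :
  cmod (\prod_(i | P i) F i) = \prod_(i | P i) cmod (F i).
Proof. exact: (big_morph _ cmodM cmod1). Qed.

End Modulus.

Lemma bernoulli (R : realDomainType) (t : R) q :
  0 <= t -> 1 - q%:R * (1 - t) <= t ^+ q.
Proof.
move=> t_ge0; elim: q => [|q IHq]; first by rewrite mul0r subr0 expr0.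
rewrite exprS -natr1; apply: le_trans (ler_wpM2l t_ge0 IHq).
have := mulr_ge0 (ler0n R q) (sqr_ge0 (1 - t)); nra.
Qed.

Lemma ler_of_exprnM (R : realFieldType) (c M : R) q :
  (forall t, 0 < t < 1 -> t ^+ q * c <= M) -> c <= M.
Proof.
move=> cM; have half01 : 0 < (2 : R)^-1 < 1 by apply/andP; split; lra.
have /andP[half_gt0 half_lt1] := half01; have cM2 := cM _ half01.
have [c_le0|c_gt0] := lerP c 0.
  by apply: le_trans cM2; rewrite -[leLHS]mul1r ler_wnM2r // exprn_ile1 // ltW.
apply/le_gtP => z zc; have [z_le0|z_gt0] := lerP z 0.
  by apply: le_lt_trans z_le0 (lt_le_trans _ cM2); rewrite mulr_gt0 // exprn_gt0.
(* Bernoulli's inequality gives (1 - d)^q >= 1 - q d > u. *)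
pose u := z / c; pose d := (1 - u) / q.+1%:R.
have u_gt0 : 0 < u by rewrite divr_gt0.
have u_lt1 : u < 1 by rewrite ltr_pdivrMr // mul1r.
have d_gt0 : 0 < d by rewrite divr_gt0 // subr_gt0.
have dE : d * (q%:R + 1) = 1 - u by rewrite /d natr1 divfK ?pnatr_eq0.
have q_ge0 : 0 <= q%:R :> R := ler0n R q.
have t01 : 0 < 1 - d < 1 by apply/andP; split; nra.
apply: lt_le_trans (cM _ t01); rewrite -ltr_pdivrMr // -/u.
by apply: lt_le_trans (bernoulli q (ltW (proj1 (andP t01)))); nra.
Qed.

Lemma sum_prod_le_expR (R : realType) (I : finType) (x : I -> R) (tau : R)
    (J : {set {set I}}) m :
  (forall k, 0 <= x k) -> 0 <= tau -> (forall A, A \in J -> #|A| = m) ->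
  tau ^+ m * \sum_(A in J) \prod_(k in A) x k <= expR (tau * \sum_k x k).
Proof.
move=> x_ge0 tau_ge0 cardJ; have tx_ge0 k : 0 <= tau * x k by rewrite mulr_ge0.
rewrite [leLHS]mulr_sumr (eq_bigr (fun A : {set I} => \prod_(k in A) (tau * x k)));
  last by move=> A AJ; rewrite big_split /= prodr_const cardJ.
apply: (@le_trans _ _ (\sum_(A : {set I}) \prod_(k in A) (tau * x k))).
  by rewrite [leRHS](bigID (mem J)) /= lerDl sumr_ge0 // => A _; apply: prodr_ge0.
apply: (@le_trans _ _ (\prod_k (tau * x k + 1))).
  by rewrite bigA_distr; apply: ler_sum => A _; rewrite -big_mkcond.
rewrite mulr_sumr expR_sum; apply: ler_prod => k _.
by rewrite addr_ge0 //= addrC expR_ge1Dx.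
Qed.

Lemma exists_perm_imset (T : finType) (A B : {set T}) :
  #|A| = #|B| -> exists s : {perm T}, s @: A = B.
Proof.
have [d] := ubnP #|A :\: B|; elim: d A => // d IHd A dAB cardAB.
have [AB|/subsetPn[a aA aB]] := boolP (A \subset B).
  by exists 1%g; rewrite imset_perm1; apply/eqP; rewrite eqEcard AB cardAB /=.
have /card_gt0P[b] : (0 < #|B :\: A|)%N.
  rewrite cardsD finset.setIC -cardAB -cardsD; apply/card_gt0P.
  by exists a; rewrite inE aB.
rewrite inE => /andP[bA bB]; pose t := tperm a b.
have [s sAB] : exists s : {perm T}, s @: (t @: A) = B.
  apply: IHd; last by rewrite card_imset //; exact: perm_inj.
  rewrite -ltnS; apply: leq_trans dAB; rewrite ltnS; apply/proper_card/properP; split.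
    apply/fintype.subsetP => _ /setDP[/imsetP[y yA ->] tyB]; rewrite inE tyB /=.
    by move: tyB; rewrite /t; case: tpermP => [_|_|_ _]; rewrite ?bB ?aA ?yA.
  exists a; first by rewrite inE aB.
  by rewrite inE aB /= -[a](tpermR a b) mem_imset //; exact: perm_inj.
by exists (t * s)%g; rewrite -sAB -imset_comp; apply: eq_imset => x; rewrite permM.
Qed.

Definition transporter (T : finType) (A B : {set T}) : {set {perm T}} :=
  [set s : {perm T} | s @: A == B].

Lemma card_transporter_gt0 (T : finType) (A B : {set T}) :
  #|A| = #|B| -> (0 < #|transporter A B|)%N.
Proof.
by case/exists_perm_imset => s sAB; apply/card_gt0P; exists s; rewrite inE sAB.
Qed.

Lemma sum_transporter (T : finType) (A B : {set T}) (V : nmodType) (F : T -> V) k :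
  k \in A ->
  (\sum_(s in transporter A B) F (s k)) *+ #|A|
    = (\sum_(j in B) F j) *+ #|transporter A B|.
Proof.
move=> kA; set G := transporter A B.
(* Precomposing with the transposition (k k'), which fixes A, permutes G. *)
have indep k' : k' \in A -> \sum_(s in G) F (s k') = \sum_(s in G) F (s k).
  move=> k'A; pose t := tperm k k'.
  have tA : t @: A = A.
    apply: im_perm_on; apply: fintype.subset_trans (tperm_on k k') _.
    by rewrite finset.subUset !finset.sub1set kA.
  rewrite (reindex_inj (mulgI t)); apply: eq_big => [s|s _]; last by rewrite permM tpermR.
  rewrite !inE -[in X in _ = X]tA -imset_comp.
  by congr (_ == _); apply: eq_imset => x; rewrite permM.
rewrite -sumr_const -(eq_bigr _ indep) exchange_big -sumr_const; apply: eq_bigr => s.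
rewrite inE => /eqP <-; rewrite big_imset //; exact: in2W perm_inj.
Qed.

Lemma mean_transporter (T : finType) (A B : {set T}) (R : numFieldType) (F : T -> R) k :
  #|A| = #|B| -> k \in A ->
  (\sum_(j in B) F j) / #|B|%:R
    = #|transporter A B|%:R^-1 * \sum_(s in transporter A B) F (s k).
Proof.
move=> cardAB kA; set G := transporter A B.
have A_neq0 : #|A|%:R != 0 :> R by rewrite pnatr_eq0 -lt0n; apply/card_gt0P; exists k.
have G_neq0 : #|G|%:R != 0 :> R by rewrite pnatr_eq0 -lt0n card_transporter_gt0.
have := sum_transporter B F kA; rewrite -/G -cardAB.
rewrite -[_ *+ #|A|]mulr_natr -[_ *+ #|G|]mulr_natr => sumE.
by rewrite -[\sum_(s in G) _](mulfK A_neq0) sumE; field; rewrite A_neq0 G_neq0.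
Qed.

Section LatticeNorm.
Variables (R : realType) (n : nat) (N : ('I_n -> R[i]) -> R).
Hypotheses (hN : is_norm N) (hlat : is_lattice_norm N) (hsym : is_symmetric_norm N).
Implicit Types (x y z w : 'I_n -> R[i]) (A B : {set 'I_n}).

Lemma norm_cmod_eq z w : (forall k, cmod (z k) = cmod (w k)) -> N z = N w.
Proof. by move=> zw; apply/eqP; rewrite eq_le !hlat // => k; rewrite zw. Qed.

Lemma normZ (a : R[i]) z : N (fun k => a * z k) = cmod a * N z.
Proof. by case: hN. Qed.

Lemma norm_triangle z w : N (fun k => z k + w k) <= N z + N w.
Proof. by case: hN. Qed.

Lemma norm0 : N (fun _ => 0) = 0.
Proof. by have := normZ 0 (fun _ => 0); rewrite cmod0 !mul0r. Qed.

Lemma norm_ge0 z : 0 <= N z.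
Proof.
have := norm_triangle z (fun k => -1 * z k).
rewrite normZ cmodN cmod1 mul1r (@norm_cmod_eq _ (fun _ => 0)) => [|k]; last first.
  by rewrite mulN1r subrr.
by rewrite norm0 -mulr2n pmulrn_lge0.
Qed.

Lemma normZ_real (r : R) z : N (fun k => r%:C * z k) = `|r| * N z.
Proof. by rewrite normZ cmod_real. Qed.

Lemma norm_eq z w : z =1 w -> N z = N w.
Proof. by move=> zw; apply: norm_cmod_eq => k; rewrite zw. Qed.

Lemma norm_sum (I : Type) (s : seq I) (P : pred I) (u : I -> 'I_n -> R[i]) :
  N (fun k => \sum_(i <- s | P i) u i k) <= \sum_(i <- s | P i) N (u i).
Proof.
elim: s => [|i s IHs].
  by rewrite big_nil (@norm_eq _ (fun _ => 0)) ?norm0 // => k; rewrite big_nil.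
pose v k := \sum_(j <- s | P j) u j k.
rewrite big_cons (@norm_eq _ (fun k => if P i then u i k + v k else v k)) => [|k];
  last by rewrite big_cons.
by case: (P i) => //; apply: le_trans (norm_triangle _ _) _; rewrite lerD2l.
Qed.

Definition unitv (j : 'I_n) : 'I_n -> R[i] := fun k => (k == j)%:R.

Lemma norm_unitv_gt0 j : 0 < N (unitv j).
Proof.
rewrite lt_neqAle norm_ge0 andbT; apply/eqP => /esym unitv0.
case: hN => definite _ _; have /eqP := definite _ unitv0 j.
by rewrite /unitv eqxx oner_eq0.
Qed.

Lemma cmod_le_norm y j : cmod (y j) * N (unitv j) <= N y.
Proof.
rewrite -[cmod _]ger0_norm ?cmod_ge0 // -normZ_real; apply: hlat => k.
rewrite cmodM cmod_real ger0_norm ?cmod_ge0 // /unitv.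
by case: eqP => [->|_]; rewrite ?cmod1 ?mulr1 // cmod0 mulr0 cmod_ge0.
Qed.

Lemma cmod_le_norm_inv y j : N y <= 1 -> cmod (y j) <= (N (unitv j))^-1.
Proof.
move=> Ny1; rewrite -[_^-1]mul1r ler_pdivlMr ?norm_unitv_gt0 //.
exact: le_trans (cmod_le_norm y j) Ny1.
Qed.

(* The left-hand vector is the average, over the permutations s carrying A
   onto B, of the vectors |y o s| restricted to A. *)
Lemma norm_mean_indicator_le y A B : #|A| = #|B| ->
  N (fun k => if k \in A then ((\sum_(j in B) cmod (y j)) / #|B|%:R)%:C else 0)
    <= N y.
Proof.
move=> cardAB; set G := transporter A B; set g : R := #|G|%:R.
have g_gt0 : 0 < g by rewrite ltr0n card_transporter_gt0.
pose u (s : {perm 'I_n}) k := if k \in A then (cmod (y (s k)))%:C else 0.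
have Nu s : N (u s) <= N y.
  rewrite -(hsym s y); apply: hlat => k; rewrite /u.
  by case: ifP => _; rewrite ?cmod0 ?cmod_ge0 // cmod_real ger0_norm ?cmod_ge0.
rewrite (@norm_eq _ (fun k => \sum_(s in G) g^-1%:C * u s k)) => [|k].
  apply: le_trans (norm_sum _ _ _) _.
  apply: (@le_trans _ _ (\sum_(s in G) g^-1 * N y)); last first.
    by rewrite sumr_const -mulr_natl mulrA mulfV ?mul1r // gt_eqF.
  have ginv_ge0 : 0 <= g^-1 by rewrite invr_ge0 ltW.
  by apply: ler_sum => s _; rewrite normZ_real ger0_norm // ler_wpM2l.
rewrite /u; case: ifP => kA; last by rewrite big1 // => s _; rewrite mulr0.
by rewrite (mean_transporter _ cardAB kA) rmorphM rmorph_sum mulr_sumr.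
Qed.

Lemma kothe_set_ubound x :
  has_ubound [set r | exists y, N y <= 1 /\ r = \sum_k cmod (x k * y k)]%classic.
Proof.
exists (\sum_k cmod (x k) / N (unitv k)) => _ [y [Ny1 ->]].
by apply: ler_sum => k _; rewrite cmodM ler_wpM2l ?cmod_ge0 ?cmod_le_norm_inv.
Qed.

Lemma ler_kothe_norm x y : N y <= 1 -> \sum_k cmod (x k * y k) <= kothe_norm N x.
Proof. by move=> Ny1; apply: ub_le_sup; [exact: kothe_set_ubound | exists y]. Qed.

Lemma kothe_norm_gt x t : t < kothe_norm N x ->
  exists2 y, N y <= 1 & t < \sum_k cmod (x k * y k).
Proof.
have set_neq0 :
    ([set r | exists y, N y <= 1 /\ r = \sum_k cmod (x k * y k)] !=set0)%classic.
  by exists (\sum_k cmod (x k * 0)), (fun _ => 0); rewrite norm0.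
by move=> /(sup_gt set_neq0) [_ [y [Ny1 ->]] ty]; exists y.
Qed.

Definition head_set (k : nat) : {set 'I_n} := [set j : 'I_n | (j < k)%N].

Lemma card_head_set k : (k <= n)%N -> #|head_set k| = k.
Proof.
move=> kn; have -> : head_set k = widen_ord kn @: [set: 'I_k].
  apply/setP => j; rewrite !inE; apply/idP/imsetP => [jk|[i _ ->] /=];
    last exact: ltn_ord.
  by exists (Ordinal jk) => //; apply: val_inj.
rewrite card_imset ?cardsT ?card_ord // => i i' /(congr1 val) /=; exact: val_inj.
Qed.

Lemma sum_cmod_head (k : nat) y :
  \sum_(j : 'I_n) cmod ((if (j < k)%N then 1 else 0) * y j)
    = \sum_(j in head_set k) cmod (y j).
Proof.
rewrite [RHS]big_mkcond; apply: eq_bigr => j _; rewrite inE.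
by case: ifP; rewrite ?mul1r // mul0r cmod0.
Qed.

Lemma ler_phi_dual k y : N y <= 1 -> \sum_(j in head_set k) cmod (y j) <= phi_dual N k.
Proof.
by move=> /(ler_kothe_norm (fun j => if (j < k)%N then 1 else 0)); rewrite sum_cmod_head.
Qed.

Lemma phi_dual_ge0 k : 0 <= phi_dual N k.
Proof.
apply: le_trans (ler_phi_dual k (y := fun _ => 0) _); rewrite ?norm0 //.
by rewrite big1 // => j _; rewrite cmod0.
Qed.

Lemma phi_dual_approx k t : t < 1 ->
  exists2 y, N y <= 1 & t * phi_dual N k <= \sum_(j in head_set k) cmod (y j).
Proof.
move=> t_lt1; have [phi_gt0|phi_le0] := ltrP 0 (phi_dual N k).
  have /kothe_norm_gt[y Ny1] : t * phi_dual N k < phi_dual N k by rewrite gtr_pMl.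
  by rewrite sum_cmod_head => ty; exists y => //; rewrite ltW.
exists (fun _ => 0); rewrite ?norm0 // big1 => [|j _]; last by rewrite cmod0.
have -> : phi_dual N k = 0 by apply/eqP; rewrite eq_le phi_le0 phi_dual_ge0.
by rewrite mulr0.
Qed.

Lemma phi_dual_gt0 k : (0 < k <= n)%N -> 0 < phi_dual N k.
Proof.
case/andP=> k_gt0 kn; pose j0 := Ordinal (leq_trans k_gt0 kn).
pose c := (N (unitv j0))^-1.
have c_gt0 : 0 < c by rewrite invr_gt0 norm_unitv_gt0.
pose y i := c%:C * unitv j0 i.
have Ny1 : N y <= 1 by rewrite normZ_real gtr0_norm // mulVf // gt_eqF ?norm_unitv_gt0.
apply: lt_le_trans (ler_phi_dual k Ny1); rewrite (bigD1 j0) ?inE //=.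
rewrite ltr_wpDr ?sumr_ge0 // => [j _|]; first exact: cmod_ge0.
by rewrite /y /unitv eqxx mulr1 cmod_real gtr0_norm.
Qed.

Definition sup_monom (A : {set 'I_n}) : R :=
  sup [set r | exists z, N z < 1 /\ r = cmod (monom A z)]%classic.

Lemma monom_set_ubound A :
  has_ubound [set r | exists z, N z < 1 /\ r = cmod (monom A z)]%classic.
Proof.
exists (\prod_(k in A) (N (unitv k))^-1) => _ [z [Nz1 ->]].
rewrite cmod_prod; apply: ler_prod => k _.
by rewrite cmod_ge0 cmod_le_norm_inv // ltW.
Qed.

Lemma cmod_monom_le_sup A z : N z <= 1 -> cmod (monom A z) <= sup_monom A.
Proof.
move=> Nz1; apply: (@ler_of_exprnM _ _ _ #|A|) => t /andP[t_gt0 t_lt1].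
have Ntz1 : N (fun k => t%:C * z k) < 1.
  by rewrite normZ_real gtr0_norm //; apply: le_lt_trans t_lt1; rewrite ler_piMr // ltW.
apply: ub_le_sup; first exact: monom_set_ubound.
exists (fun k => t%:C * z k); split => //.
rewrite /monom !cmod_prod [RHS](eq_bigr (fun k => t * cmod (z k))) => [|k _].
  by rewrite big_split /= prodr_const.
by rewrite cmodM cmod_real gtr0_norm.
Qed.

Lemma mean_exprn_le_sup A B y : #|A| = #|B| -> N y <= 1 ->
  ((\sum_(j in B) cmod (y j)) / #|B|%:R) ^+ #|A| <= sup_monom A.
Proof.
move=> cardAB Ny1; have := norm_mean_indicator_le y cardAB.
set c := _ / _ => Nw.
have c_ge0 : 0 <= c by rewrite divr_ge0 ?sumr_ge0 // => j _; exact: cmod_ge0.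
apply: le_trans (cmod_monom_le_sup A (le_trans Nw Ny1)).
rewrite /monom cmod_prod (eq_bigr (fun _ => c)) ?prodr_const // => k kA.
by rewrite kA cmod_real ger0_norm.
Qed.

Lemma phi_dual_exprn_le_sup A m : #|A| = m -> (m <= n)%N ->
  (phi_dual N m / m%:R) ^+ m <= sup_monom A.
Proof.
move=> cardA mn; apply: (@ler_of_exprnM _ _ _ m) => t /andP[t_gt0 t_lt1].
have [y Ny1 ty] := phi_dual_approx m t_lt1.
have cardAh : #|A| = #|head_set m| by rewrite card_head_set.
have := mean_exprn_le_sup cardAh Ny1; rewrite -cardAh cardA; apply: le_trans.
rewrite -exprMn mulrA; apply: lerXn2r; rewrite ?nnegrE.
- by rewrite divr_ge0 // mulr_ge0 ?phi_dual_ge0 // ltW.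
- by rewrite divr_ge0 // sumr_ge0 // => j _; exact: cmod_ge0.
- by apply: ler_wpM2r => //; rewrite invr_ge0.
Qed.

Lemma cX_le A m : #|A| = m -> (m <= n)%N -> cX N A <= (m%:R / phi_dual N m) ^+ m.
Proof.
move=> cardA mn; set P := (phi_dual N m / m%:R) ^+ m.
have P_gt0 : 0 < P.
  rewrite /P; case: m cardA mn {P} => [|m] _ mn; first by rewrite expr0.
  by rewrite exprn_gt0 // divr_gt0 // phi_dual_gt0.
have PS := phi_dual_exprn_le_sup cardA mn.
have -> : (m%:R / phi_dual N m) ^+ m = P^-1 by rewrite /P -exprVn invf_div.
by rewrite /cX div1r lef_pV2 ?posrE // (lt_le_trans P_gt0).
Qed.

Lemma sum_cX_monom_le (J : {set {set 'I_n}}) m z :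
  (forall A, A \in J -> #|A| = m) -> (m <= n)%N ->
  \sum_(A in J) cX N A * cmod (monom A z)
    <= (m%:R / phi_dual N m) ^+ m * \sum_(A in J) \prod_(k in A) cmod (z k).
Proof.
move=> cardJ mn; rewrite mulr_sumr; apply: ler_sum => A AJ; rewrite /monom cmod_prod.
apply: ler_wpM2r; last exact: cX_le (cardJ A AJ) mn.
by apply: prodr_ge0 => k _; exact: cmod_ge0.
Qed.

Lemma sum_prod_cmod_le (J : {set {set 'I_n}}) m z :
  (forall A, A \in J -> #|A| = m) -> N z <= 1 ->
  (m%:R / phi_dual N n) ^+ m * \sum_(A in J) \prod_(k in A) cmod (z k) <= expR 1 ^+ m.
Proof.
move=> cardJ Nz1; set b := phi_dual N n.
have b_ge0 : 0 <= b := phi_dual_ge0 n.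
have sum_le : \sum_k cmod (z k) <= b.
  have := ler_phi_dual n Nz1; rewrite (eq_bigl predT) // => j.
  by rewrite inE ltn_ord.
apply: le_trans (sum_prod_le_expR (fun k => cmod_ge0 (z k)) _ cardJ) _.
  by rewrite divr_ge0.
rewrite -expRM_natl mulr1 ler_expR; have [->|b_neq0] := eqVneq b 0.
  by rewrite invr0 mulr0 mul0r.
have b_gt0 : 0 < b by rewrite lt_neqAle eq_sym b_neq0.
by rewrite -mulrA ler_piMr // ler_pdivrMl // mulr1.
Qed.

End LatticeNorm.

Unset Implicit Arguments.

Theorem corollary2p20 (R : realType) (n m : nat) (N : ('I_n -> R[i]) -> R)
  (hN : is_norm N) (hlat : is_lattice_norm N) (hsym : is_symmetric_norm N)
  (hmn : (m <= n)%N) (J : {set {set 'I_n}})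
  (hJ : forall A, A \in J -> #|A| = m) :
  lambda_hat N J <= expR 1 ^+ m * (phi_dual N n / phi_dual N m) ^+ m.
Proof.
apply: ge_sup => [|_ [z [Nz1 ->]]].
  exists (\sum_(A in J) cX N A * cmod (monom A (fun _ => 0))), (fun _ => 0).
  by rewrite norm0.
apply: le_trans (sum_cX_monom_le hN hlat hsym z hJ hmn) _.
have := sum_prod_cmod_le hN hlat hJ (ltW Nz1).
have [-> |m_gt0] := posnP m; first by rewrite !expr0 !mul1r.
have a_gt0 : 0 < phi_dual N m by apply: (phi_dual_gt0 hN hlat); rewrite m_gt0 hmn.
have b_gt0 : 0 < phi_dual N n.
  by apply: (phi_dual_gt0 hN hlat); rewrite (leq_trans m_gt0 hmn) leqnn.
set E := \sum_(A in J) _; move=> E_le.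
rewrite (_ : m%:R / _ = phi_dual N n / phi_dual N m * (m%:R / phi_dual N n)); last first.
  by field; rewrite !gt_eqF.
rewrite exprMn -mulrA [leRHS]mulrC; apply: ler_wpM2l E_le.
by rewrite exprn_ge0 // divr_ge0 // ltW.
Qed.
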